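(* Let $L$ be a distributive lattice and $\mathbf x,\mathbf y\in L^n$. Then $\mathbf x$ and $\mathbf y$ are g-comonotone if and only if $\bigwedge_{i\in I}(x_i\vee y_i)=\bigwedge_{i\in I}x_i\vee\bigwedge_{i\in I}y_i$ for every non-empty subset $I\subseteq\{1,\dots,n\}$. Similarly, $\mathbf x$ and $\mathbf y$ are dually g-comonotone if and only if $\bigvee_{i\in I}(x_i\wedge y_i)=\bigvee_{i\in I}x_i\wedge\bigvee_{i\in I}y_i$ for every non-empty subset $I\subseteq\{1,\dots,n\}$.
   Context: $\mathbf x,\mathbf y\in L^n$ are g-comonotone if for every pair $i,j\in\{1,\dots,n\}$: $(x_i\vee y_i)\wedge(x_j\vee y_j)=(x_i\wedge x_j)\vee(y_i\wedge y_j)$; dually g-comonotone if for every pair $i,j$: $(x_i\wedge y_i)\vee(x_j\wedge y_j)=(x_i\vee x_j)\wedge(y_i\vee y_j)$. *)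

From mathcomp Require Import all_boot all_order.
Set Implicit Arguments. Unset Strict Implicit. Unset Printing Implicit Defensive.
Import Order.LTheory.
Local Open Scope order_scope.

(* Vectors in L^n are functions 'I_n -> L (index set {0,...,n-1}). *)

Definition g_comonotone d (L : latticeType d) n (x y : 'I_n -> L) : Prop :=
  forall i j : 'I_n,
    ((x i `|` y i) `&` (x j `|` y j)) = ((x i `&` x j) `|` (y i `&` y j)).

Definition dually_g_comonotone d (L : latticeType d) n (x y : 'I_n -> L) : Prop :=
  forall i j : 'I_n,
    ((x i `&` y i) `|` (x j `&` y j)) = ((x i `|` x j) `&` (y i `|` y j)).

(* Meet / join over a non-empty subset I of 'I_n (L need not be bounded):
   we seed the iteration with x i0 for some i0 \in I; by idempotency this
   is exactly the meet (resp. join) of the x i, i \in I. *)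
Definition bigmeet_ne d (L : latticeType d) n (I : {set 'I_n}) (i0 : 'I_n)
  (x : 'I_n -> L) : L := \big[Order.meet/x i0]_(i in I) x i.

Definition bigjoin_ne d (L : latticeType d) n (I : {set 'I_n}) (i0 : 'I_n)
  (x : 'I_n -> L) : L := \big[Order.join/x i0]_(i in I) x i.

(* In a distributive lattice, (/\_i x_i) \/ (/\_j y_j) is the meet of the
   x_i \/ y_j over all pairs of indices i, j in I.  Each x_i \/ y_j lies above
   (x_i \/ y_i) /\ (x_j \/ y_j), which g-comonotonicity rewrites as
   (x_i /\ x_j) \/ (y_i /\ y_j); hence /\_i (x_i \/ y_i) is below
   (/\_i x_i) \/ (/\_i y_i), and the converse inequality holds in every
   lattice.  The two-element sets I = {i, j} give back g-comonotonicity.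
   The dual statement is the same one read in the dual lattice. *)

From mathcomp Require Import all_boot all_order.
Local Open Scope order_scope.
Import Order.LTheory.

Section SeededBigMeet.
Context {d : Order.disp_t} {L : meetSemilatticeType d} {T : finType}.
Implicit Types (A : {pred T}) (F : T -> L).

Lemma bigmeet_le A (a : L) F j :
  j \in A -> \big[Order.meet/a]_(i in A) F i <= F j.
Proof. by move=> jA; rewrite (bigD1 j) //= leIl. Qed.

Lemma le_bigmeet_seed A F i0 (z : L) : i0 \in A ->
  (forall i, i \in A -> z <= F i) -> z <= \big[Order.meet/F i0]_(i in A) F i.
Proof.
move=> i0A zF; elim/big_ind: _ => [||i /zF //]; first exact: zF.
by move=> u v zu zv; rewrite lexI zu zv.
Qed.

Lemma bigmeet_set2 F (i j : T) :
  \big[Order.meet/F i]_(k in [set i; j]) F k = F i `&` F j.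
Proof.
apply/le_anti; rewrite lexI !bigmeet_le ?inE ?eqxx ?orbT //=.
apply: le_bigmeet_seed => [|k]; first by rewrite !inE eqxx.
by rewrite !inE => /orP[] /eqP->; [exact: leIl | exact: leIr].
Qed.

End SeededBigMeet.

Lemma joinx_bigmeet {d} {L : distrLatticeType d} {I : Type} (r : seq I)
    (P : pred I) (F : I -> L) (a b : L) :
  a `|` \big[Order.meet/b]_(i <- r | P i) F i
  = \big[Order.meet/(a `|` b)]_(i <- r | P i) (a `|` F i).
Proof. by apply: (big_morph (Order.join a)) => // u v; rewrite joinIr. Qed.

Lemma g_comonotone_le {d} {L : latticeType d} {n} {x y : 'I_n -> L}
    (i j : 'I_n) :
  g_comonotone x y -> (x i `|` y i) `&` (x j `|` y j) <= x i `|` y j.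
Proof. by move=> xy; rewrite xy leU2 ?leIl ?leIr. Qed.

Lemma le_bigmeet_ne_join {d} {L : latticeType d} {n} (I : {set 'I_n})
    (i0 : 'I_n) (x y : 'I_n -> L) : i0 \in I ->
  bigmeet_ne I i0 x `|` bigmeet_ne I i0 y
  <= bigmeet_ne I i0 (fun i => x i `|` y i).
Proof.
by move=> i0I; apply: le_bigmeet_seed => // k kI; rewrite leU2 ?bigmeet_le.
Qed.

Lemma g_comonotone_bigmeet {d} {L : distrLatticeType d} {n} (x y : 'I_n -> L) :
  g_comonotone x y -> forall (I : {set 'I_n}) (i0 : 'I_n), i0 \in I ->
    bigmeet_ne I i0 (fun i => x i `|` y i)
    = bigmeet_ne I i0 x `|` bigmeet_ne I i0 y.
Proof.
move=> xy I i0 i0I; apply/le_anti; rewrite le_bigmeet_ne_join // andbT.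
rewrite /bigmeet_ne joinx_bigmeet; apply: le_bigmeet_seed => // j jI.
rewrite [_ `|` y j]joinC joinx_bigmeet; apply: le_bigmeet_seed => // i iI.
rewrite [y j `|` _]joinC; apply: le_trans _ (g_comonotone_le i j xy).
by rewrite lexI !bigmeet_le.
Qed.

Lemma g_comonotone_bigmeetP {d} {L : distrLatticeType d} {n} (x y : 'I_n -> L) :
  g_comonotone x y <->
    forall (I : {set 'I_n}) (i0 : 'I_n), i0 \in I ->
      bigmeet_ne I i0 (fun i => x i `|` y i)
      = bigmeet_ne I i0 x `|` bigmeet_ne I i0 y.
Proof.
split=> [|xyI i j]; first exact: g_comonotone_bigmeet.
have := xyI [set i; j] i; rewrite /bigmeet_ne !bigmeet_set2 !inE eqxx.
by apply.
Qed.

Theorem lemma2 (d : Order.disp_t) (L : distrLatticeType d) (n : nat)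
    (x y : 'I_n -> L) :
  (g_comonotone x y <->
     forall (I : {set 'I_n}) (i0 : 'I_n), i0 \in I ->
       bigmeet_ne I i0 (fun i => x i `|` y i)
       = bigmeet_ne I i0 x `|` bigmeet_ne I i0 y)
  /\
  (dually_g_comonotone x y <->
     forall (I : {set 'I_n}) (i0 : 'I_n), i0 \in I ->
       bigjoin_ne I i0 (fun i => x i `&` y i)
       = bigjoin_ne I i0 x `&` bigjoin_ne I i0 y).
Proof.
split; first exact: g_comonotone_bigmeetP.
(* Meet and join are swapped in [L^d], so there [g_comonotone] and
   [bigmeet_ne] unfold to [dually_g_comonotone] and [bigjoin_ne]. *)
exact: (@g_comonotone_bigmeetP _ L^d _ x y).
Qed.
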